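(* Let $d\ge1$ be an integer and $p=(d+1)(d+2)/2$. Let $f(x,y)=\sum_{a,b\ge0,\,a+b\le d} c_{a,b}\,x^{2a}y^{2b}$ (i.e. $f=c_0+c_1x^2+c_2y^2+\cdots+c_{p-1}y^{2d}$, a real linear combination of the $p$ monomials $x^{2a}y^{2b}$ with $a+b\le d$) with all coefficients satisfying $|c|\le 1$. Let $\delta>0$ and for $i=1,\dots,N$ let $S_i=\{(x,y)\mid x=x_i>0,\ 0<y_i-\delta\le y\le y_i+\delta\}$, and suppose the curve $f=0$ passes through (meets) every $S_i$. Then $$\sum_{i=1}^N f(x_i,y_i)^2\le 2(d+1)(d+2)\,\delta^2\sum_{i=1}^N h_d(x_i,y_i+\delta),\qquad h_d(x,y)=y^2\sum_{l,j\ge0,\ l+j\le d-1}(l+1)^2x^{4j}y^{4l}.$$ In particular $h_2(x,y)=y^2(1+x^4+4y^4)$, $h_3(x,y)=y^2(1+x^4+4y^4+x^8+4x^4y^4+9y^8)$, and $h_4(x,y)=y^2(1+x^4+4y^4+x^8+4x^4y^4+9y^8+x^{12}+4x^8y^4+9x^4y^8+16y^{12})$. *)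

From HB Require Import structures.
From mathcomp Require Import all_boot all_order all_algebra.
From mathcomp Require Import reals.
Set Implicit Arguments. Unset Strict Implicit. Unset Printing Implicit Defensive.
Import Order.TTheory GRing.Theory Num.Theory.
Local Open Scope ring_scope.

Definition fpoly (R : realType) (d : nat) (c : nat -> nat -> R) (x y : R) : R :=
  \sum_(a < d.+1) \sum_(b < d.+1 - a) c a b * x ^+ (2 * a) * y ^+ (2 * b).

Definition hfun (R : realType) (d : nat) (x y : R) : R :=
  y ^+ 2 * \sum_(l < d) \sum_(j < d - l)
              ((l.+1) ^ 2)%:R * x ^+ (4 * j) * y ^+ (4 * l).

From HB Require Import structures.
From mathcomp Require Import all_boot all_order all_algebra.
From mathcomp Require Import reals.
From mathcomp Require Import ring lra zify.
Import Order.TTheory GRing.Theory Num.Theory.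
Set Implicit Arguments. Unset Strict Implicit. Unset Printing Implicit Defensive.
Local Open Scope ring_scope.

(* Fix i and a root y of f(x_i, .) with |y - y_i| <= delta.  On [0, Y] with
   Y = y_i + delta, the monomial x^(2a) y^(2b) is Lipschitz in y with constant
   its y-derivative at Y, so |c| <= 1 gives |f(x_i, y_i)| <= delta * S, where S
   is the sum of these p = (d+1)(d+2)/2 derivatives.  Cauchy-Schwarz over the
   triangle of index pairs gives S^2 <= p * (sum of their squares), and that sum
   of squares is exactly 4 h_d(x_i, Y). *)

Lemma sqr_sum_le (R : realDomainType) (I : finType) (A : {pred I}) (F : I -> R) :
  (\sum_(i in A) F i) ^+ 2 <= #|A|%:R * \sum_(i in A) F i ^+ 2.
Proof.
set n : R := #|A|%:R; set S := \sum_(i in A) F i; set Q := \sum_(i in A) F i ^+ 2.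
have inner i : \sum_(j in A) (F i - F j) ^+ 2 = n * F i ^+ 2 - 2 * F i * S + Q.
  under eq_bigr do rewrite sqrrB.
  by rewrite !big_split /= sumrN sumr_const sumrMnl -mulr_sumr -/S -/Q /n; ring.
have : 0 <= \sum_(i in A) \sum_(j in A) (F i - F j) ^+ 2.
  by do 2!(apply: sumr_ge0 => ? _); apply: sqr_ge0.
under eq_bigr do rewrite inner.
rewrite !big_split /= sumrN sumr_const -!mulr_sumr -mulr_suml -mulr_sumr -/S -/Q.
by rewrite -mulr_natl -/n; nra.
Qed.

Lemma big_triangle_pair (R : Type) (idx : R) (op : Monoid.com_law idx)
    (n : nat) (F : nat -> nat -> R) :
  \big[op/idx]_(a < n) \big[op/idx]_(b < n - a) F a b
    = \big[op/idx]_(p : 'I_n * 'I_n | (p.1 + p.2 < n)%N) F p.1 p.2.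
Proof.
rewrite -(pair_big_dep xpredT (fun a b : 'I_n => a + b < n)%N (fun a b : 'I_n => F a b)).
apply: eq_bigr => a _; rewrite (big_ord_widen n (F a)) ?leq_subr //.
by apply: eq_big => // b; rewrite ltn_subRL.
Qed.

Lemma exchange_big_triangle (R : Type) (idx : R) (op : Monoid.com_law idx)
    (n : nat) (F : nat -> nat -> R) :
  \big[op/idx]_(a < n) \big[op/idx]_(b < n - a) F a b
    = \big[op/idx]_(b < n) \big[op/idx]_(a < n - b) F a b.
Proof.
rewrite big_triangle_pair (big_triangle_pair _ n (fun b a => F a b)).
pose swap (p : 'I_n * 'I_n) := (p.2, p.1).
have swapK : involutive swap by case.
rewrite (reindex_inj (inv_inj swapK)) /=.
by apply: eq_bigl => p; rewrite addnC.
Qed.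

Lemma sum_triangle_card (n : nat) :
  (\sum_(a < n) (n - a)).*2 = (n * n.+1)%N.
Proof.
elim: n => [|n IH]; first by rewrite big_ord0.
rewrite big_ord_recl subn0 doubleD.
under eq_bigr do rewrite /bump /= subSS.
rewrite IH; lia.
Qed.

Lemma sqr_sum_triangle_le (R : realDomainType) (n : nat) (F : nat -> nat -> R) :
  2 * (\sum_(a < n) \sum_(b < n - a) F a b) ^+ 2
    <= (n * n.+1)%:R * \sum_(a < n) \sum_(b < n - a) F a b ^+ 2.
Proof.
set T := [pred p : 'I_n * 'I_n | (p.1 + p.2 < n)%N].
have card_T : #|T|.*2 = (n * n.+1)%N.
  rewrite -sum1_card -sum_triangle_card -(big_triangle_pair _ n (fun _ _ => 1%N)).
  by congr _.*2; apply: eq_bigr => a _; rewrite sum1_card card_ord.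
rewrite big_triangle_pair (big_triangle_pair _ n (fun a b => F a b ^+ 2)).
by rewrite -card_T -mul2n natrM -mulrA ler_pM2l // sqr_sum_le.
Qed.

Lemma normr_subXX_le (R : numDomainType) (u v Y : R) (n : nat) :
  0 <= u -> 0 <= v -> u <= Y -> v <= Y ->
  `|u ^+ n - v ^+ n| <= n%:R * Y ^+ n.-1 * `|u - v|.
Proof.
move=> u_ge0 v_ge0 uY vY; have Y_ge0 : 0 <= Y := le_trans u_ge0 uY.
rewrite subrXX normrM mulrC ler_wpM2r //.
apply: le_trans (ler_norm_sum _ _ _) _.
rewrite mulr_natl -[n in _ *+ n]card_ord -sumr_const ler_sum // => i _.
rewrite normrM !normrX (ger0_norm u_ge0) (ger0_norm v_ge0).
have -> : n.-1 = (n.-1 - i + i)%N by have := ltn_ord i; lia.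
by rewrite exprD addnK ler_pM ?exprn_ge0 // lerXn2r.
Qed.

Definition monomial_dy (R : pzSemiRingType) (x y : R) (a b : nat) : R :=
  (2 * b)%:R * x ^+ (2 * a) * y ^+ (2 * b).-1.

Section PointEstimate.

Variables (R : realType) (d : nat) (c : nat -> nat -> R).
Hypothesis c_le1 : forall a b : nat, (a + b <= d)%N -> `|c a b| <= 1.

Lemma ler_norm_fpolyB (x y y' Y : R) :
  0 <= y <= Y -> 0 <= y' <= Y ->
  `|fpoly d c x y - fpoly d c x y'|
    <= `|y - y'| * \sum_(a < d.+1) \sum_(b < d.+1 - a) monomial_dy x Y a b.
Proof.
move=> /andP[y_ge0 yY] /andP[y'_ge0 y'Y].
rewrite /fpoly -sumrB mulr_sumr; apply: le_trans (ler_norm_sum _ _ _) _.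
apply: ler_sum => a _; rewrite -sumrB mulr_sumr.
apply: le_trans (ler_norm_sum _ _ _) _; apply: ler_sum => b _.
have c_ab_le1 : `|c a b| <= 1 by apply: c_le1; have := ltn_ord b; lia.
have x_ge0 : 0 <= x ^+ (2 * a) by rewrite exprn_even_ge0 // oddM.
have := normr_subXX_le (2 * b) y_ge0 y'_ge0 yY y'Y.
set D := `|_ - _|; set K := _ * _ * `|y - y'| => DK.
have -> : `|y - y'| * monomial_dy x Y a b = 1 * (x ^+ (2 * a) * K).
  by rewrite /K /monomial_dy; ring.
rewrite -mulrBr normrM normrM (ger0_norm x_ge0) -/D -mulrA.
by rewrite ler_pM ?mulr_ge0 ?normr_ge0 ?ler_wpM2l.
Qed.

Lemma sum_monomial_dy_sqr (x Y : R) :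
  \sum_(a < d.+1) \sum_(b < d.+1 - a) monomial_dy x Y a b ^+ 2 = 4 * hfun d x Y.
Proof.
pose g a l : R := ((l.+1) ^ 2)%:R * x ^+ (4 * a) * Y ^+ (4 * l).
have dy0 a : monomial_dy x Y a 0 = 0 by rewrite /monomial_dy muln0 !mul0r.
have dyS a l : monomial_dy x Y a l.+1 ^+ 2 = 4 * Y ^+ 2 * g a l.
  rewrite /monomial_dy /g (_ : (2 * l.+1).-1 = (2 * l).+1); last by lia.
  rewrite natrX natrM.
  have four_mul n : (4 * n = 2 * n * 2)%N by lia.
  rewrite (four_mul a) (four_mul l) (exprM x (2 * a)) (exprM Y (2 * l)).
  by rewrite (exprS Y); ring.
have row (a : 'I_d.+1) :
    \sum_(b < d.+1 - a) monomial_dy x Y a b ^+ 2 = 4 * Y ^+ 2 * \sum_(l < d - a) g a l.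
  rewrite subSn ?leq_ord // big_ord_recl dy0 expr0n add0r mulr_sumr.
  by apply: eq_bigr => l _; rewrite dyS.
rewrite (eq_bigr _ (fun a _ => row a)) big_ord_recr /= subnn big_ord0 mulr0 addr0.
by rewrite -mulr_sumr exchange_big_triangle /hfun mulrA.
Qed.

Lemma fpoly_sqr_le_of_root (delta x y0 y : R) :
  0 < delta -> 0 < y0 - delta -> y0 - delta <= y <= y0 + delta ->
  fpoly d c x y = 0 ->
  fpoly d c x y0 ^+ 2
    <= 2 * ((d + 1) * (d + 2))%:R * delta ^+ 2 * hfun d x (y0 + delta).
Proof.
move=> delta_gt0 y0_gt0 /andP[y_lo y_hi] root_y.
set Y := y0 + delta.
set S := \sum_(a < d.+1) \sum_(b < d.+1 - a) monomial_dy x Y a b.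
have Y_ge0 : 0 <= Y by rewrite /Y; lra.
have S_ge0 : 0 <= S.
  apply: sumr_ge0 => a _; apply: sumr_ge0 => b _.
  rewrite /monomial_dy !mulr_ge0 //; last exact: exprn_ge0.
  by rewrite exprn_even_ge0 // oddM.
have lipschitz : `|fpoly d c x y0| <= delta * S.
  have y_dist : `|y0 - y| <= delta by rewrite ler_norml; apply/andP; split; lra.
  rewrite -[fpoly d c x y0]subr0 -root_y.
  apply: le_trans (ler_norm_fpolyB x (Y := Y) _ _) (ler_wpM2r S_ge0 y_dist);
    by apply/andP; split; rewrite /Y; lra.
have sqr_lipschitz : fpoly d c x y0 ^+ 2 <= (delta * S) ^+ 2.
  rewrite -(real_normK (num_real _)) lerXn2r // nnegrE ?normr_ge0 //.
  by rewrite mulr_ge0 // ltW.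
have cauchy_schwarz := sqr_sum_triangle_le d.+1 (monomial_dy x Y).
rewrite sum_monomial_dy_sqr -/S in cauchy_schwarz.
have := ler_wpM2l (sqr_ge0 delta) cauchy_schwarz.
rewrite addn1 addn2; lra.
Qed.

End PointEstimate.

Theorem corollary5 (R : realType) (d : nat) (hd : (1 <= d)%N)
  (c : nat -> nat -> R)
  (hc : forall a b : nat, (a + b <= d)%N -> `|c a b| <= 1)
  (delta : R) (hdelta : 0 < delta)
  (N : nat) (xs ys : 'I_N -> R)
  (hx : forall i, 0 < xs i)
  (hy : forall i, 0 < ys i - delta)
  (hmeet : forall i, exists y : R,
      ys i - delta <= y <= ys i + delta /\ fpoly d c (xs i) y = 0) :
  \sum_(i < N) (fpoly d c (xs i) (ys i)) ^+ 2
    <= 2 * ((d + 1) * (d + 2))%:R * delta ^+ 2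
         * \sum_(i < N) hfun d (xs i) (ys i + delta).
Proof.
(* [hd] and [hx] are unused: x occurs only in even powers, and d = 0 is fine. *)
rewrite mulr_sumr; apply: ler_sum => i _.
have [y [y_near root_y]] := hmeet i.
exact: (fpoly_sqr_le_of_root hc hdelta (hy i) y_near root_y).
Qed.
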